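(* Let $\mu\in[0,1]$, $A\in\mathbb R^{q\times n}$ of full row rank, $b\in\mathbb R^q$, $\gamma>0$, $\delta\in(0,\|b\|_{LL_2,\gamma})$, $g(x):=\|Ax-b\|_{LL_2,\gamma}-\delta$ and $F(x):=\|x\|_1-\mu\|x\|+\delta_{\{g\le0\}}(x)$. Then: (i) MFCQ holds at every feasible point, i.e., for every $x$ with $g(x)\le0$ and $g(x)=0$ one has $\nabla g(x)\neq0$; (ii) if $\mu\in[0,1)$, $F$ is level-bounded; (iii) if $\mu=1$ and $A$ has no zero columns, $F$ is level-bounded.
   Context: For $y\in\mathbb R^q$, the Lorentzian norm is $\|y\|_{LL_2,\gamma}:=\sum_{i=1}^q\log\big(1+y_i^2/\gamma^2\big)$. $\|\cdot\|_1$ is the $\ell_1$ norm and $\|\cdot\|$ the Euclidean norm; $\delta_C$ is the indicator function of $C$. For a single smooth constraint $g\le0$, MFCQ at a feasible $x$ means: if $g(x)=0$ there exists $d$ with $\langle\nabla g(x),d\rangle<0$, equivalently $\nabla g(x)\ne0$. A function is level-bounded if all its sublevel sets are bounded. *)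

From Stdlib Require Import Reals Lra Lia.
Open Scope R_scope.

(* Vectors in R^n are functions nat -> R (only indices < n matter);
   matrices in R^{q x n} are functions nat -> nat -> R (entry (i,j)). *)

Fixpoint rsum (f : nat -> R) (n : nat) : R :=
  match n with
  | O => 0
  | S k => rsum f k + f k
  end.

Definition matvec (n : nat) (A : nat -> nat -> R) (x : nat -> R) : nat -> R :=
  fun i => rsum (fun j => A i j * x j) n.

Definition lorentz (q : nat) (gamma : R) (y : nat -> R) : R :=
  rsum (fun i => ln (1 + (y i)^2 / gamma^2)) q.

Definition norm1 (n : nat) (x : nat -> R) : R := rsum (fun j => Rabs (x j)) n.
Definition norm2 (n : nat) (x : nat -> R) : R := sqrt (rsum (fun j => (x j)^2) n).

Definition full_row_rank (q n : nat) (A : nat -> nat -> R) : Prop :=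
  forall y : nat -> R,
    (forall j, (j < n)%nat -> rsum (fun i => y i * A i j) q = 0) ->
    forall i, (i < q)%nat -> y i = 0.

Definition gfun (q n : nat) (A : nat -> nat -> R) (b : nat -> R) (gamma delta : R)
  (x : nat -> R) : R :=
  lorentz q gamma (fun i => matvec n A x i - b i) - delta.

Definition shift (x : nat -> R) (j : nat) (t : R) : nat -> R :=
  fun k => if Nat.eqb k j then x k + t else x k.

Definition is_gradient (n : nat) (f : (nat -> R) -> R) (x grad : nat -> R) : Prop :=
  forall j, (j < n)%nat -> derivable_pt_lim (fun t => f (shift x j t)) 0 (grad j).

(* F(x) <= alpha, where F(x) = ||x||_1 - mu ||x|| + indicator_{g <= 0}(x)
   (the indicator is +infinity outside {g <= 0}, so F(x) <= alpha iff
   g(x) <= 0 and ||x||_1 - mu ||x|| <= alpha). *)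
Definition F_le (q n : nat) (A : nat -> nat -> R) (b : nat -> R) (gamma delta mu : R)
  (x : nat -> R) (alpha : R) : Prop :=
  gfun q n A b gamma delta x <= 0 /\ norm1 n x - mu * norm2 n x <= alpha.

Definition F_level_bounded (q n : nat) (A : nat -> nat -> R) (b : nat -> R)
  (gamma delta mu : R) : Prop :=
  forall alpha : R, exists M : R, forall x : nat -> R,
    F_le q n A b gamma delta mu x alpha -> norm2 n x <= M.

(* MFCQ: the partial derivatives of g are the columns of A^T applied to the
   weights 2 r_i / (gamma^2 + r_i^2) of the residual r = Ax - b.  Full row
   rank makes them vanish only when every weight, hence r itself, is zero;
   but then g = -delta < 0, so the constraint is not active.

   Level-boundedness: ||x|| <= ||x||_1 gives it at once for mu < 1.  For
   mu = 1, the bound ||x||_1 - ||x|| <= alpha forces ||x||_1 to be within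
   2|alpha| of max_k |x_k| = |x_j|, while feasibility bounds every (Ax)_i.
   Choosing a row i with A_ij <> 0, the identity
   A_ij x_j = (Ax)_i - sum_{k <> j} A_ik x_k then bounds |x_j|, hence ||x||. *)

From Stdlib Require Import Reals Lra Lia Classical.
From Coquelicot Require Import Coquelicot.
Open Scope R_scope.

Lemma rsum_ext f g n :
  (forall i, (i < n)%nat -> f i = g i) -> rsum f n = rsum g n.
Proof.
  induction n as [|n IH]; intros H; simpl; [reflexivity|].
  rewrite IH, H; [reflexivity | lia | intros; apply H; lia].
Qed.

Lemma rsum_le f g n :
  (forall i, (i < n)%nat -> f i <= g i) -> rsum f n <= rsum g n.
Proof.
  induction n as [|n IH]; intros H; simpl; [lra|].
  assert (f n <= g n) by (apply H; lia).
  assert (rsum f n <= rsum g n) by (apply IH; intros; apply H; lia).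
  lra.
Qed.

Lemma rsum_nonneg f n : (forall i, (i < n)%nat -> 0 <= f i) -> 0 <= rsum f n.
Proof.
  induction n as [|n IH]; intros H; simpl; [lra|].
  assert (0 <= f n) by (apply H; lia).
  assert (0 <= rsum f n) by (apply IH; intros; apply H; lia).
  lra.
Qed.

Lemma rsum_ge_term f n j :
  (forall i, (i < n)%nat -> 0 <= f i) -> (j < n)%nat -> f j <= rsum f n.
Proof.
  induction n as [|n IH]; intros H Hj; simpl; [lia|].
  assert (0 <= rsum f n) by (apply rsum_nonneg; intros; apply H; lia).
  assert (0 <= f n) by (apply H; lia).
  destruct (Nat.eq_dec j n) as [->|Hjn]; [lra|].
  assert (f j <= rsum f n) by (apply IH; [intros; apply H|]; lia).
  lra.
Qed.

Lemma Rabs_rsum_le f n : Rabs (rsum f n) <= rsum (fun i => Rabs (f i)) n.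
Proof.
  induction n as [|n IH]; simpl; [rewrite Rabs_R0; lra|].
  pose proof (Rabs_triang (rsum f n) (f n)). lra.
Qed.

Lemma rsum_scal_l c f n : rsum (fun i => c * f i) n = c * rsum f n.
Proof. induction n as [|n IH]; simpl; [|rewrite IH]; ring. Qed.

Lemma rsum_split_at f n j : (j < n)%nat ->
  rsum f n = rsum (fun k => if Nat.eqb k j then 0 else f k) n + f j.
Proof.
  induction n as [|n IH]; intros Hj; simpl; [lia|].
  destruct (Nat.eq_dec j n) as [->|Hjn].
  - rewrite Nat.eqb_refl.
    rewrite (rsum_ext (fun k => if Nat.eqb k n then 0 else f k) f); [ring|].
    intros i Hi. destruct (Nat.eqb_spec i n); [lia | reflexivity].
  - destruct (Nat.eqb_spec n j); [lia|]. rewrite IH by lia. ring.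
Qed.

Lemma exists_argmax_abs (x : nat -> R) n : (0 < n)%nat ->
  exists j, (j < n)%nat /\ forall k, (k < n)%nat -> Rabs (x k) <= Rabs (x j).
Proof.
  induction n as [|n IH]; intros Hn; [lia|].
  destruct (Nat.eq_dec n 0) as [->|Hn0].
  { exists 0%nat. split; [lia|]. intros k Hk. replace k with 0%nat by lia. lra. }
  destruct IH as [j [Hj Hmax]]; [lia|].
  destruct (Rle_dec (Rabs (x j)) (Rabs (x n))) as [Hle|Hgt].
  - exists n. split; [lia|]. intros k Hk.
    destruct (Nat.eq_dec k n) as [->|]; [lra|].
    specialize (Hmax k ltac:(lia)). lra.
  - exists j. split; [lia|]. intros k Hk.
    destruct (Nat.eq_dec k n) as [->|]; [lra|]. apply Hmax; lia.
Qed.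

Lemma norm1_nonneg n x : 0 <= norm1 n x.
Proof. apply rsum_nonneg. intros. apply Rabs_pos. Qed.

Lemma Rabs_le_norm1 n x j : (j < n)%nat -> Rabs (x j) <= norm1 n x.
Proof. apply (rsum_ge_term (fun k => Rabs (x k))). intros. apply Rabs_pos. Qed.

Lemma norm2_nonneg n x : 0 <= norm2 n x.
Proof. apply sqrt_pos. Qed.

Lemma norm2_sq n x : norm2 n x ^ 2 = rsum (fun k => x k ^ 2) n.
Proof. apply pow2_sqrt, rsum_nonneg. intros. apply pow2_ge_0. Qed.

Lemma norm2_sq_le_max_norm1 n x m :
  (forall k, (k < n)%nat -> Rabs (x k) <= m) -> norm2 n x ^ 2 <= m * norm1 n x.
Proof.
  intros Hm. rewrite norm2_sq. unfold norm1. rewrite <- rsum_scal_l.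
  apply rsum_le. intros k Hk.
  specialize (Hm k Hk). pose proof (pow2_abs (x k)). pose proof (Rabs_pos (x k)).
  nra.
Qed.

Lemma norm2_le_norm1 n x : norm2 n x <= norm1 n x.
Proof.
  pose proof (norm2_sq_le_max_norm1 n x (norm1 n x) (Rabs_le_norm1 n x)).
  pose proof (norm2_nonneg n x). pose proof (norm1_nonneg n x). nra.
Qed.

(* From (||x||_1 - alpha)^2 <= ||x||^2 <= m ||x||_1. *)
Lemma norm1_le_max_add n x m alpha : 0 <= m ->
  (forall k, (k < n)%nat -> Rabs (x k) <= m) ->
  norm1 n x - norm2 n x <= alpha -> norm1 n x <= m + 2 * Rabs alpha.
Proof.
  intros Hm0 Hm Hgap.
  pose proof (norm2_sq_le_max_norm1 n x m Hm).
  pose proof (norm2_nonneg n x). pose proof (Rle_abs alpha). pose proof (Rabs_pos alpha).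
  destruct (Rle_dec (norm1 n x) (Rabs alpha)); [lra|].
  assert ((norm1 n x - alpha) ^ 2 <= norm2 n x ^ 2) by nra.
  nra.
Qed.

Lemma exists_entry_bound q n (A : nat -> nat -> R) :
  exists K, 0 <= K /\ forall i k, (i < q)%nat -> (k < n)%nat -> Rabs (A i k) <= K.
Proof.
  exists (rsum (fun i => norm1 n (A i)) q). split.
  - apply rsum_nonneg. intros. apply norm1_nonneg.
  - intros i k Hi Hk. eapply Rle_trans; [apply (Rabs_le_norm1 n (A i) k Hk)|].
    apply (rsum_ge_term (fun i => norm1 n (A i))); [intros; apply norm1_nonneg | exact Hi].
Qed.

Lemma exists_column_lower_bound q n (A : nat -> nat -> R) :
  (forall j, (j < n)%nat -> exists i, (i < q)%nat /\ A i j <> 0) ->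
  exists c, 0 < c /\ forall j, (j < n)%nat -> exists i, (i < q)%nat /\ c <= Rabs (A i j).
Proof.
  induction n as [|n IH]; intros Hcol.
  { exists 1. split; [lra | intros; lia]. }
  destruct IH as [c [Hc Hlow]]; [intros; apply Hcol; lia|].
  destruct (Hcol n ltac:(lia)) as [i [Hi Hai]].
  exists (Rmin c (Rabs (A i n))). split.
  { apply Rmin_glb_lt; [exact Hc | apply Rabs_pos_lt, Hai]. }
  intros j Hj. destruct (Nat.eq_dec j n) as [->|Hjn].
  - exists i. split; [exact Hi | apply Rmin_r].
  - destruct (Hlow j ltac:(lia)) as [i' [Hi' Hci']].
    exists i'. split; [exact Hi'|]. eapply Rle_trans; [apply Rmin_l | exact Hci'].
Qed.

Lemma matvec_shift n A x i j t : (j < n)%nat ->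
  matvec n A (shift x j t) i = matvec n A x i + A i j * t.
Proof.
  intros Hj. unfold matvec.
  rewrite (rsum_split_at _ n j Hj), (rsum_split_at (fun k => A i k * x k) n j Hj).
  unfold shift. rewrite Nat.eqb_refl.
  rewrite (rsum_ext
             (fun k => if Nat.eqb k j then 0 else A i k * (if Nat.eqb k j then x k + t else x k))
             (fun k => if Nat.eqb k j then 0 else A i k * x k)); [ring|].
  intros k _. destruct (Nat.eqb k j); reflexivity.
Qed.

Lemma matvec_coord_bound n A x i j K : (j < n)%nat ->
  (forall k, (k < n)%nat -> Rabs (A i k) <= K) ->
  Rabs (A i j) * Rabs (x j) <= Rabs (matvec n A x i) + K * (norm1 n x - Rabs (x j)).
Proof.
  intros Hj HK. unfold matvec.
  rewrite (rsum_split_at (fun k => A i k * x k) n j Hj).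
  unfold norm1. rewrite (rsum_split_at (fun k => Rabs (x k)) n j Hj).
  set (rest := rsum (fun k => if Nat.eqb k j then 0 else A i k * x k) n).
  assert (Hrest : Rabs rest <= K * rsum (fun k => if Nat.eqb k j then 0 else Rabs (x k)) n).
  { eapply Rle_trans; [apply Rabs_rsum_le|]. rewrite <- rsum_scal_l.
    apply rsum_le. intros k Hk. destruct (Nat.eqb k j).
    - rewrite Rabs_R0. lra.
    - rewrite Rabs_mult. apply Rmult_le_compat_r; [apply Rabs_pos | apply HK, Hk]. }
  pose proof (Rabs_triang (rest + A i j * x j) (- rest)) as Htri.
  replace (rest + A i j * x j + - rest) with (A i j * x j) in Htri by ring.
  rewrite Rabs_mult, Rabs_Ropp in Htri. lra.
Qed.

Section Lorentz.

Variables (q : nat) (gamma : R).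
Hypothesis gamma_pos : 0 < gamma.

Lemma lorentz_term_nonneg r : 0 <= ln (1 + r ^ 2 / gamma ^ 2).
Proof.
  rewrite <- ln_1. apply ln_le; [lra|].
  assert (0 <= r ^ 2 / gamma ^ 2)
    by (apply Rle_mult_inv_pos; [apply pow2_ge_0 | apply pow_lt, gamma_pos]).
  lra.
Qed.

Lemma lorentz_le_coord_bound delta y i :
  lorentz q gamma y <= delta -> (i < q)%nat ->
  Rabs (y i) <= sqrt (gamma ^ 2 * (exp delta - 1)).
Proof.
  intros Hle Hi.
  set (s := y i ^ 2 / gamma ^ 2).
  assert (Hs0 : 0 <= s)
    by (apply Rle_mult_inv_pos; [apply pow2_ge_0 | apply pow_lt, gamma_pos]).
  assert (Hterm : ln (1 + s) <= delta).
  { eapply Rle_trans; [|exact Hle].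
    apply (rsum_ge_term (fun i => ln (1 + y i ^ 2 / gamma ^ 2))); [|exact Hi].
    intros. apply lorentz_term_nonneg. }
  assert (Hexp : 1 + s <= exp delta).
  { rewrite <- (exp_ln (1 + s)) by lra.
    destruct Hterm as [Hlt | ->]; [apply Rlt_le, exp_increasing, Hlt | lra]. }
  rewrite <- sqrt_Rsqr_abs. apply sqrt_le_1_alt.
  replace (Rsqr (y i)) with (gamma ^ 2 * s) by (unfold s, Rsqr; field; lra).
  apply Rmult_le_compat_l; [apply pow2_ge_0 | lra].
Qed.

Lemma lorentz_zero y : (forall i, (i < q)%nat -> y i = 0) -> lorentz q gamma y = 0.
Proof.
  intros Hy. unfold lorentz.
  rewrite (rsum_ext (fun i => ln (1 + y i ^ 2 / gamma ^ 2)) (fun _ => 0)).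
  - clear Hy. induction q as [|k IH]; simpl; [|rewrite IH]; ring.
  - intros i Hi. rewrite Hy by exact Hi.
    replace (1 + 0 ^ 2 / gamma ^ 2) with 1 by (field; lra). apply ln_1.
Qed.

Definition lorentz_weight (r : R) : R := 2 * r / (gamma ^ 2 + r ^ 2).

Lemma lorentz_weight_eq0 r : lorentz_weight r = 0 -> r = 0.
Proof.
  unfold lorentz_weight, Rdiv. intros H.
  assert (0 < gamma ^ 2 + r ^ 2) by (pose proof (pow2_ge_0 r); nra).
  apply Rmult_integral in H as [H | H]; [lra|].
  exfalso. revert H. apply Rinv_neq_0_compat. lra.
Qed.

Lemma is_derive_lorentz_term r a :
  is_derive (fun t => ln (1 + (r + a * t) ^ 2 / gamma ^ 2)) 0 (lorentz_weight r * a).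
Proof.
  unfold lorentz_weight. auto_derive; replace (r + a * 0) with r by ring.
  - assert (0 < / (gamma * (gamma * 1))) by (apply Rinv_0_lt_compat; nra). nra.
  - field. split; [nra | lra].
Qed.

End Lorentz.

Lemma is_derive_rsum (f : nat -> R -> R) (d : nat -> R) t q :
  (forall i, (i < q)%nat -> is_derive (f i) t (d i)) ->
  is_derive (fun s => rsum (fun i => f i s) q) t (rsum d q).
Proof.
  induction q as [|q IH]; intros H; simpl.
  - apply (is_derive_const (V := R_NormedModule) 0 t).
  - apply (is_derive_plus (fun s => rsum (fun i => f i s) q) (f q));
      [apply IH; intros; apply H | apply H]; lia.
Qed.

Section Constraint.

Variables (q n : nat) (A : nat -> nat -> R) (b : nat -> R) (gamma delta : R).
Hypothesis gamma_pos : 0 < gamma.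

Definition residual (x : nat -> R) : nat -> R := fun i => matvec n A x i - b i.

Definition gfun_grad (x : nat -> R) : nat -> R :=
  fun j => rsum (fun i => lorentz_weight gamma (residual x i) * A i j) q.

Lemma gfun_gradient x : is_gradient n (gfun q n A b gamma delta) x (gfun_grad x).
Proof.
  intros j Hj. apply is_derive_Reals. unfold gfun, lorentz.
  apply (is_derive_ext
           (fun t => rsum (fun i => ln (1 + (residual x i + A i j * t) ^ 2 / gamma ^ 2)) q - delta)).
  { intros t. f_equal. apply rsum_ext. intros i _.
    rewrite matvec_shift by exact Hj. unfold residual. do 4 f_equal. ring. }
  replace (gfun_grad x j) with (gfun_grad x j - 0) by ring.
  apply (is_derive_minus (V := R_NormedModule)); [|apply (is_derive_const (V := R_NormedModule))].
  apply (is_derive_rsum (fun i t => ln (1 + (residual x i + A i j * t) ^ 2 / gamma ^ 2))).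
  intros i _. apply is_derive_lorentz_term, gamma_pos.
Qed.

Lemma gfun_grad_nonzero x :
  full_row_rank q n A -> 0 < delta -> gfun q n A b gamma delta x = 0 ->
  exists j, (j < n)%nat /\ gfun_grad x j <> 0.
Proof.
  intros Hrank Hdelta Hactive. apply NNPP. intros Hnone.
  assert (Hweights : forall i, (i < q)%nat -> lorentz_weight gamma (residual x i) = 0).
  { apply Hrank. intros j Hj. apply NNPP. intros Hj0. apply Hnone. exists j. auto. }
  assert (Hres : lorentz q gamma (residual x) = 0).
  { apply (lorentz_zero q gamma gamma_pos). intros i Hi.
    apply (lorentz_weight_eq0 gamma gamma_pos), Hweights, Hi. }
  unfold gfun in Hactive. fold (residual x) in Hactive. lra.
Qed.

Lemma feasible_matvec_bound : exists R0, 0 <= R0 /\ forall x,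
  gfun q n A b gamma delta x <= 0 -> forall i, (i < q)%nat -> Rabs (matvec n A x i) <= R0.
Proof.
  exists (sqrt (gamma ^ 2 * (exp delta - 1)) + norm1 q b).
  split; [pose proof (sqrt_pos (gamma ^ 2 * (exp delta - 1))); pose proof (norm1_nonneg q b); lra|].
  intros x Hfeas i Hi.
  assert (Hr : Rabs (residual x i) <= sqrt (gamma ^ 2 * (exp delta - 1))).
  { apply (lorentz_le_coord_bound q gamma gamma_pos delta); [|exact Hi].
    unfold gfun in Hfeas. fold (residual x) in Hfeas. lra. }
  pose proof (Rabs_le_norm1 q b i Hi).
  pose proof (Rabs_triang (residual x i) (b i)).
  replace (residual x i + b i) with (matvec n A x i) in * by (unfold residual; ring).
  lra.
Qed.

Lemma level_bounded_mu1 :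
  (forall j, (j < n)%nat -> exists i, (i < q)%nat /\ A i j <> 0) ->
  F_level_bounded q n A b gamma delta 1.
Proof.
  intros Hcol alpha.
  destruct (exists_column_lower_bound q n A Hcol) as [c [Hc Hlow]].
  destruct (exists_entry_bound q n A) as [K [HK0 HK]].
  destruct feasible_matvec_bound as [R0 [HR0 HR]].
  pose proof (Rabs_pos alpha).
  exists ((R0 + 2 * K * Rabs alpha) / c + 2 * Rabs alpha).
  assert (0 <= (R0 + 2 * K * Rabs alpha) / c)
    by (apply Rle_mult_inv_pos; [nra | exact Hc]).
  intros x [Hfeas Hgap]. rewrite Rmult_1_l in Hgap.
  destruct (Nat.eq_dec n 0) as [Hn|Hn].
  { subst n. unfold norm2. simpl. rewrite sqrt_0. lra. }
  destruct (exists_argmax_abs x n ltac:(lia)) as [j [Hj Hmax]].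
  destruct (Hlow j Hj) as [i [Hi Hcij]].
  pose proof (Rabs_pos (x j)).
  assert (Hnorm1 : norm1 n x <= Rabs (x j) + 2 * Rabs alpha)
    by (apply norm1_le_max_add; assumption).
  pose proof (matvec_coord_bound n A x i j K Hj (fun k Hk => HK i k Hi Hk)) as Hcoord.
  pose proof (HR x Hfeas i Hi).
  assert (Hxj : c * Rabs (x j) <= R0 + 2 * K * Rabs alpha).
  { assert (c * Rabs (x j) <= Rabs (A i j) * Rabs (x j))
      by (apply Rmult_le_compat_r; assumption).
    assert (K * (norm1 n x - Rabs (x j)) <= K * (2 * Rabs alpha))
      by (apply Rmult_le_compat_l; lra).
    lra. }
  assert (Rabs (x j) <= (R0 + 2 * K * Rabs alpha) / c)
    by (apply Rle_div_r; [exact Hc | lra]).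
  pose proof (norm2_le_norm1 n x). lra.
Qed.

End Constraint.

Lemma level_bounded_mu_lt1 q n A b gamma delta mu :
  0 <= mu < 1 -> F_level_bounded q n A b gamma delta mu.
Proof.
  intros Hmu alpha. exists (alpha / (1 - mu)). intros x [_ Hgap].
  pose proof (norm2_le_norm1 n x).
  apply Rle_div_r; [lra | nra].
Qed.

Theorem mainTheorem17 (q n : nat) (A : nat -> nat -> R) (b : nat -> R)
  (gamma delta mu : R) :
  0 <= mu <= 1 ->
  full_row_rank q n A ->
  0 < gamma ->
  0 < delta < lorentz q gamma b ->
  (forall x : nat -> R,
     gfun q n A b gamma delta x <= 0 ->
     gfun q n A b gamma delta x = 0 ->
     exists grad : nat -> R,
       is_gradient n (gfun q n A b gamma delta) x grad /\
       exists j, (j < n)%nat /\ grad j <> 0)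
  /\
  (mu < 1 -> F_level_bounded q n A b gamma delta mu)
  /\
  (mu = 1 ->
   (forall j, (j < n)%nat -> exists i, (i < q)%nat /\ A i j <> 0) ->
   F_level_bounded q n A b gamma delta mu).
Proof.
  intros Hmu Hrank Hgamma Hdelta. split; [|split].
  - intros x _ Hactive. exists (gfun_grad q n A b gamma x). split.
    + apply gfun_gradient, Hgamma.
    + apply (gfun_grad_nonzero q n A b gamma delta Hgamma); [exact Hrank | lra | exact Hactive].
  - intros Hlt. apply level_bounded_mu_lt1. lra.
  - intros -> Hcol. apply level_bounded_mu1; assumption.
Qed.
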